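(* Let $d\in(0,1]$ and $0<\rho\le d^5/(3^{40}2^5)$, and let $n$ be sufficiently large (e.g. $n\ge 30$). Let $H$ be an $n$-vertex $(\rho,d)$-cherry-dense $3$-graph. Then there is a spanning subgraph $H'$ of $H$ such that: (1) for every pair $S$ of distinct vertices, either $\deg_{H'}(S)\ge dn/3$ or $\deg_{H'}(S)=0$; moreover the number of pairs $S$ with $\deg_{H'}(S)=0$ is at most $\rho^{1/5}\binom n2$ (equivalently $|\partial H'|\ge(1-\rho^{1/5})\binom n2$ when counting unordered pairs); (2) $H'$ is $(\rho^{1/5},d)$-cherry-dense.
   Context: A $3$-graph $H$ has edges that are $3$-element subsets of $V(H)$. For a pair $S=\{x,y\}$ of distinct vertices, $\deg_H(S)=\deg_H(xy)$ is the number of edges of $H$ containing $S$. The shadow of $H$ is $\partial H=\{(x,y):\deg_H(xy)>0\}$. For $\vec G_1,\vec G_2\subseteq V(H)\times V(H)$, let $\mathcal P_2(\vec G_1,\vec G_2)=\{(x,y,z)\in V(H)^3:(x,y)\in\vec G_1,(y,z)\in\vec G_2\}$ and $e_H(\vec G_1,\vec G_2)=|\{(x,y,z)\in\mathcal P_2(\vec G_1,\vec G_2):\{x,y,z\}\in E(H)\}|$. An $n$-vertex $3$-graph $H$ is $(\rho,d)$-cherry-dense if $e_H(\vec G_1,\vec G_2)\ge d|\mathcal P_2(\vec G_1,\vec G_2)|-\rho n^3$ for all $\vec G_1,\vec G_2\subseteq V(H)\times V(H)$. A spanning subgraph $H'$ of $H$ has $V(H')=V(H)$ and $E(H')\subseteq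 E(H)$. *)

From mathcomp Require Import all_boot all_order all_algebra.
Set Implicit Arguments. Unset Strict Implicit. Unset Printing Implicit Defensive.
Import Order.TTheory GRing.Theory Num.Theory.

Definition is_3graph (n : nat) (E : {set {set 'I_n}}) : Prop :=
  forall e, e \in E -> #|e| = 3.

Definition deg (n : nat) (E : {set {set 'I_n}}) (S : {set 'I_n}) : nat :=
  #|[set e in E | S \subset e]|.

Definition P2 (n : nat) (G1 G2 : {set 'I_n * 'I_n}) : {set ('I_n * 'I_n) * 'I_n} :=
  [set t | ((t.1.1, t.1.2) \in G1) && ((t.1.2, t.2) \in G2)].

Definition eH (n : nat) (E : {set {set 'I_n}}) (G1 G2 : {set 'I_n * 'I_n}) : nat :=
  #|[set t in P2 G1 G2 | [set t.1.1; t.1.2; t.2] \in E]|.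

Definition cherry_dense (R : numDomainType) (n : nat) (E : {set {set 'I_n}})
    (rho d : R) : Prop :=
  forall G1 G2 : {set 'I_n * 'I_n},
    (d * (#|P2 G1 G2|)%:R - rho * (n%:R) ^+ 3 <= (eH E G1 G2)%:R)%R.

(* Let H be an n-vertex (rho, d)-cherry-dense 3-graph and r = rho^(1/5).
   Call a pair low if its degree is below 2dn/3, and a vertex heavy if it
   lies in at least dn/12 low pairs.  H' is obtained from H by deleting every
   edge that contains a low pair or a heavy vertex.
   - Cherry-density applied to (low pairs, all pairs) shows that there are at
     most 3 rho n^2 / d ordered low pairs; double counting then bounds the
     number of heavy vertices by 36 rho n / d^2, which is below dn/6.
   - A pair that is not low and avoids heavy vertices loses at most
     dn/12 + dn/12 + dn/6 edges, so it keeps degree at least dn/3; all other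
     pairs have degree 0 in H', and there are few of them.
   - Each cherry destroyed by the cleaning has a low pair or a heavy vertex in
     one of three positions, so cherry-density drops by at most
     3 |low| n + 3 |heavy| n^2 <= (r - rho) n^3.
   The file first proves the counting facts about the cleaning of a 3-graph
   along an arbitrary set of pairs B and of vertices V, then specializes them
   to low pairs and heavy vertices, isolates the arithmetic of the constants,
   and finally derives the theorem, where rho <= d^5 / (3^40 2^5) yields
   1000 r <= d. *)

From mathcomp Require Import all_boot all_order all_algebra.
From mathcomp Require Import lra zify.
Set Implicit Arguments. Unset Strict Implicit. Unset Printing Implicit Defensive.
Import Order.TTheory GRing.Theory Num.Theory.

Lemma card_pairs (T1 T2 : finType) (P : pred (T1 * T2)) :
  #|[set u | P u]| = \sum_(a : T1) #|[set b | P (a, b)]|.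
Proof.
have -> : #|[set u | P u]| = \sum_(u : T1 * T2) (P u : nat).
  by rewrite -sum1_card big_mkcond /=; apply: eq_bigr => u _; rewrite inE; case: (P u).
transitivity (\sum_(u : T1 * T2 | xpredT u.1 && xpredT u.2) (P (u.1, u.2) : nat)).
  by apply: eq_big => // -[].
rewrite -(pair_big xpredT xpredT (fun a b => (P (a, b) : nat))) /=.
apply: eq_big => // a _; rewrite -sum1_card [RHS]big_mkcond /=.
by apply: eq_big => // b _; rewrite in_set; case: (P (a, b)).
Qed.

Lemma card_setU_le (T : finType) (A B : {set T}) : #|A :|: B| <= #|A| + #|B|.
Proof. exact: (leq_card_setU A B).1. Qed.

Lemma pair_sub_triple (T : finType) (S : {set T}) a b c :
  S \subset [set a; b; c] -> #|S| = 2 ->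
  [\/ S = [set a; b], S = [set a; c] | S = [set b; c]].
Proof.
move=> sub /eqP /cards2P [x [y [nxy ES]]].
have hx : x \in [set a; b; c] by apply: (subsetP sub); rewrite ES !inE eqxx.
have hy : y \in [set a; b; c] by apply: (subsetP sub); rewrite ES !inE eqxx orbT.
rewrite ES; move: hx hy nxy; rewrite !inE.
case/orP => [/orP [/eqP->|/eqP->]|/eqP->]; case/orP => [/orP [/eqP->|/eqP->]|/eqP->];
  rewrite ?eqxx // => _;
  rewrite ?[[set b; a]]setUC ?[[set c; a]]setUC ?[[set c; b]]setUC.
all: by [constructor 1 | constructor 2 | constructor 3].
Qed.

Lemma card_triple (T : finType) (x y z : T) : x != y -> z \notin [set x; y] ->
  #|[set x; y; z]| = 3.
Proof.
move=> nxy nz; have -> : [set x; y; z] = z |: [set x; y] by rewrite setUC.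
by rewrite cardsU1 nz cards2 nxy.
Qed.

Lemma triple_inj (T : finType) (a b c c' : T) : #|[set a; b; c]| = 3 ->
  [set a; b; c] = [set a; b; c'] -> c = c'.
Proof.
move=> h3 eq3; have : c \in [set a; b; c'] by rewrite -eq3 !inE eqxx orbT.
have card_le2 w : w \in [set a; b] -> #|[set a; b; w]| <= 2.
  by move=> wab; rewrite (setUidPl _) ?sub1set // cards2; case: (a != b).
rewrite !inE => /orP [/orP [ca|cb]|/eqP //].
- by move: (card_le2 c); rewrite !inE ca h3 => /(_ isT).
- by move: (card_le2 c); rewrite !inE cb orbT h3 => /(_ isT).
Qed.

Lemma sqr_le_4bin2 (n : nat) : 2 <= n -> n * n <= 4 * 'C(n, 2).
Proof.
elim: n => [|n IH] // n2.
have [/IH|] := ltnP 1 n; first by rewrite binS bin1; lia.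
by case: n {IH} n2 => [|[]].
Qed.

Lemma card_preimset3 (T : finType) (X : {set T}) (f g : T -> T) :
  injective f -> injective g -> #|X :|: f @^-1: X :|: g @^-1: X| <= 3 * #|X|.
Proof.
move=> f_inj g_inj.
have := card_setU_le X (f @^-1: X).
have := card_setU_le (X :|: f @^-1: X) (g @^-1: X).
rewrite !card_preimset //; lia.
Qed.

Definition swap3 {T : Type} (t : (T * T) * T) := ((t.1.1, t.2), t.1.2).
Definition rot3 {T : Type} (t : (T * T) * T) := ((t.1.2, t.2), t.1.1).

Lemma swap3_inj {T : Type} : injective (@swap3 T).
Proof. by apply: (can_inj (g := @swap3 T)) => -[[]]. Qed.

Lemma rot3_inj {T : Type} : injective (@rot3 T).
Proof. by apply: (can_inj (g := fun t => ((t.2, t.1.1), t.1.2))) => -[[]]. Qed.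

Section Cleaning.
Variables (n : nat) (E B : {set {set 'I_n}}) (V : {set 'I_n}).
Hypothesis B_pairs : forall T, T \in B -> #|T| = 2.

Definition clean : {set {set 'I_n}} :=
  [set e in E | [disjoint V & e] && [forall T in B, ~~ (T \subset e)]].

Definition pair_nbhd (x : 'I_n) : {set 'I_n} := [set y | [set x; y] \in B].
Definition ordered_pairs : {set 'I_n * 'I_n} := [set p | [set p.1; p.2] \in B].

Lemma ordered_pairsE a b : ((a, b) \in ordered_pairs) = ([set a; b] \in B).
Proof. by rewrite inE. Qed.

Lemma card_ordered_pairs : #|ordered_pairs| = \sum_x #|pair_nbhd x|.
Proof. exact: card_pairs. Qed.

Lemma clean_sub : clean \subset E.
Proof. by apply/subsetP => e; rewrite inE => /andP []. Qed.

Lemma deg_clean_pair (S : {set 'I_n}) : S \in B -> deg clean S = 0.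
Proof.
move=> SB; apply/eqP; rewrite cards_eq0; apply/eqP/setP => e; rewrite !inE.
apply/negbTE; apply/negP => /andP [/andP [_ /andP [_ /forallP /(_ S)]]].
by rewrite SB /= => /negP.
Qed.

Lemma deg_clean_vertex (S : {set 'I_n}) v :
  v \in S -> v \in V -> deg clean S = 0.
Proof.
move=> vS vV; apply/eqP; rewrite cards_eq0; apply/eqP/setP => e; rewrite !inE.
apply/negbTE; apply/negP => /andP [/andP [_ /andP [dis _]] /subsetP /(_ v vS) ve].
by rewrite (disjointFl dis ve) in vV.
Qed.

Lemma removed_triple a b c :
  [set a; b; c] \in E -> [set a; b; c] \notin clean ->
  [|| a \in V, b \in V, c \in V, [set a; b] \in B, [set a; c] \in B
    | [set b; c] \in B].
Proof.
rewrite inE => -> /=; rewrite negb_and => /orP [].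
  rewrite -setI_eq0 => /set0Pn [v]; rewrite inE => /andP [vV].
  by rewrite !inE => /orP [/orP []|] /eqP <-; rewrite vV ?orbT.
case/forallPn => T; rewrite negb_imply negbK => /andP [TB Te].
by case: (pair_sub_triple Te (B_pairs TB)) => <-; rewrite TB !orbT.
Qed.

(* Every edge through a surviving pair {x, y} that the cleaning removes has
   its third vertex in the B-neighbourhood of x or of y, or in V. *)
Lemma deg_clean_lb x y : is_3graph E ->
  x != y -> [set x; y] \notin B -> x \notin V -> y \notin V ->
  deg E [set x; y] <=
    deg clean [set x; y] + #|pair_nbhd x| + #|pair_nbhd y| + #|V|.
Proof.
move=> E3 nxy xyB xV yV; set S := [set x; y].
set Z := pair_nbhd x :|: pair_nbhd y :|: V.
have cover : [set e in E | S \subset e] \subset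
    [set e in clean | S \subset e] :|: (fun z => [set x; y; z]) @: Z.
  apply/subsetP => e; rewrite inE => /andP [eE Se].
  rewrite in_setU inE Se andbT; case: (boolP (e \in clean)) => //= e_rm.
  have e3 := E3 _ eE.
  have : ~~ (e \subset S) by apply/negP => /subset_leq_card; rewrite e3 cards2 nxy.
  case/subsetPn => z ze zS.
  have ee : e = [set x; y; z].
    apply/eqP; rewrite eq_sym eqEcard e3 (card_triple nxy zS) andbT.
    by rewrite subUset sub1set ze andbT.
  apply/imsetP; exists z => //; rewrite ee in eE e_rm.
  move: (removed_triple eE e_rm); rewrite (negbTE xV) (negbTE yV) (negbTE xyB) /=.
  by rewrite !inE => /or3P [] ->; rewrite ?orbT.
apply: (leq_trans (subset_leq_card cover)); apply: (leq_trans (card_setU_le _ _)).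
rewrite -!addnA leq_add2l; apply: (leq_trans (leq_imset_card _ _)).
rewrite addnA; apply: (leq_trans (card_setU_le _ _)).
by rewrite leq_add2r card_setU_le.
Qed.

(* A cherry destroyed by the cleaning has a pair of B or a vertex of V in one
   of three positions, hence the cleaning loses at most 3 |B| n + 3 |V| n^2
   cherries of any P_2(G1, G2) (B counted as ordered pairs). *)
Lemma eH_clean_loss G1 G2 :
  eH E G1 G2 <= eH clean G1 G2 + 3 * (#|ordered_pairs| * n) + 3 * (#|V| * (n * n)).
Proof.
set W := setX ordered_pairs [set: 'I_n].
set U := setX (setX V [set: 'I_n]) [set: 'I_n].
have cover : [set t in P2 G1 G2 | [set t.1.1; t.1.2; t.2] \in E] \subset
    [set t in P2 G1 G2 | [set t.1.1; t.1.2; t.2] \in clean] :|: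
    ((W :|: swap3 @^-1: W :|: rot3 @^-1: W) :|:
     (U :|: rot3 @^-1: U :|: (rot3 \o swap3) @^-1: U)).
  apply/subsetP => -[[a b] c]; rewrite inE /= => /andP [tP eE].
  rewrite in_setU inE tP /=.
  case: (boolP ([set a; b; c] \in clean)) => //= rm.
  move: (removed_triple eE rm); rewrite !in_setU !inE /= !andbT.
  by case/or4P => [->|->|->|/or3P [] ->]; rewrite ?orbT.
rewrite /eH; apply: (leq_trans (subset_leq_card cover)).
apply: (leq_trans (card_setU_le _ _)); rewrite -addnA leq_add2l.
apply: (leq_trans (card_setU_le _ _)); apply: leq_add.
  have -> : #|ordered_pairs| * n = #|W| by rewrite cardsX cardsT card_ord.
  exact: card_preimset3 swap3_inj rot3_inj.
have -> : #|V| * (n * n) = #|U| by rewrite !cardsX !cardsT card_ord mulnA.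
exact: card_preimset3 rot3_inj (inj_comp rot3_inj swap3_inj).
Qed.
End Cleaning.

(* In a 3-graph, a pair (x, y) extends to at most deg {x, y} cherries
   (x, y, z) spanning an edge, so e_H(G, V x V) is at most the sum of the
   degrees of the pairs of G. *)
Lemma eH_le_sum_deg (n : nat) (E : {set {set 'I_n}}) (G : {set 'I_n * 'I_n}) :
  is_3graph E -> eH E G [set: _] <= \sum_(p in G) deg E [set p.1; p.2].
Proof.
move=> E3; rewrite /eH card_pairs [X in _ <= X]big_mkcond /=.
apply: leq_sum => -[a b] _; case: ifP => abG; last first.
  rewrite leqn0 cards_eq0; apply/eqP/setP => c.
  by rewrite !inE /= abG.
rewrite /deg -(@card_in_imset _ _ (fun c => [set a; b; c])).
  apply: subset_leq_card; apply/subsetP => e /imsetP [c].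
  rewrite !inE /= => /andP [_ abcE] ->; rewrite abcE /=.
  exact: subsetUl.
move=> c c'; rewrite inE /= => /andP [_ abcE] _; apply: triple_inj.
exact: E3 _ abcE.
Qed.


Local Open Scope ring_scope.

Section LowDegreePairs.
Variables (R : realFieldType) (n : nat) (E : {set {set 'I_n}}) (d rho : R).
Hypothesis E3 : is_3graph E.
Hypothesis d_gt0 : 0 < d.
Hypothesis n_ge2 : (2 <= n)%N.
Local Notation m := (n%:R : R).

Definition low_pairs : {set {set 'I_n}} :=
  [set S : {set 'I_n} | (#|S| == 2)%N && ((deg E S)%:R < 2 / 3 * d * m)].
Definition heavy : {set 'I_n} :=
  [set x | d * m / 12 <= (#|pair_nbhd low_pairs x|)%:R].
Definition cleaned : {set {set 'I_n}} := clean E low_pairs heavy.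

Local Notation low_ord := (ordered_pairs low_pairs).

Lemma low_pairs_card2 T : T \in low_pairs -> #|T| = 2%N.
Proof. by rewrite inE => /andP [/eqP]. Qed.

Lemma m_gt0 : 0 < m.
Proof. by rewrite ltr0n (leq_trans _ n_ge2). Qed.

(* Double counting: every heavy vertex accounts for dn/12 ordered low pairs. *)
Lemma card_heavy : (#|heavy|)%:R * (d * m / 12) <= (#|low_ord|)%:R.
Proof.
rewrite card_ordered_pairs natr_sum mulr_natl -sumr_const.
rewrite [X in _ <= X](bigID (mem heavy)) /= -[X in X <= _]addr0.
apply: lerD; first by apply: ler_sum => x; rewrite inE.
by apply: sumr_ge0 => x _; rewrite ler0n.
Qed.

(* Cherry-density applied to (low pairs, all pairs): low pairs are few, since
   each of them extends to fewer than 2dn/3 edges instead of the expected dn. *)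
Lemma card_low_pairs : cherry_dense E rho d ->
  (#|low_ord|)%:R * d * m <= 3 * rho * m ^+ 3.
Proof.
move=> E_dense; have := E_dense low_ord [set: _].
have -> : P2 low_ord [set: _] = setX low_ord [set: 'I_n].
  by apply/setP => -[[a b] c]; rewrite !inE.
rewrite cardsX cardsT card_ord natrM => dense.
have sparse : (eH E low_ord [set: _])%:R <= (#|low_ord|)%:R * (2 / 3 * d * m).
  apply: (@le_trans _ _ (\sum_(p in low_ord) deg E [set p.1; p.2])%:R).
    by rewrite ler_nat eH_le_sum_deg.
  rewrite natr_sum mulr_natl -sumr_const; apply: ler_sum => p.
  by rewrite !inE => /andP [_ /ltW].
lra.
Qed.

Section FewHeavy.
Hypothesis few_heavy : (#|heavy|%:R : R) <= d * m / 6.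

(* A pair that is neither low nor touches a heavy vertex keeps degree at least
   2dn/3 - dn/12 - dn/12 - dn/6 = dn/3 after cleaning. *)
Lemma cleaned_deg_lb x y : x != y -> [set x; y] \notin low_pairs ->
  x \notin heavy -> y \notin heavy -> d * m / 3 <= (deg cleaned [set x; y])%:R.
Proof.
move=> nxy xy_ok x_ok y_ok.
have loss : (deg E [set x; y])%:R <= (deg cleaned [set x; y] +
    #|pair_nbhd low_pairs x| + #|pair_nbhd low_pairs y| + #|heavy|)%:R :> R.
  by rewrite ler_nat deg_clean_lb // => T /low_pairs_card2.
have : 2 / 3 * d * m <= (deg E [set x; y])%:R.
  by move: xy_ok; rewrite inE cards2 nxy /= -leNgt.
have : (#|pair_nbhd low_pairs x|)%:R < d * m / 12 by move: x_ok; rewrite inE -ltNge.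
have : (#|pair_nbhd low_pairs y|)%:R < d * m / 12 by move: y_ok; rewrite inE -ltNge.
rewrite !natrD in loss; have := few_heavy; lra.
Qed.

Lemma cleaned_deg_dichotomy (S : {set 'I_n}) : #|S| = 2%N ->
  d * m / 3 <= (deg cleaned S)%:R \/ deg cleaned S = 0%N.
Proof.
move=> /eqP /cards2P [x [y [nxy ->]]].
have [xy_low|xy_ok] := boolP ([set x; y] \in low_pairs).
  by right; apply: deg_clean_pair.
have [x_heavy|x_ok] := boolP (x \in heavy).
  by right; apply: (@deg_clean_vertex _ _ _ _ _ x); rewrite // !inE eqxx.
have [y_heavy|y_ok] := boolP (y \in heavy).
  by right; apply: (@deg_clean_vertex _ _ _ _ _ y); rewrite // !inE eqxx orbT.
by left; apply: cleaned_deg_lb.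
Qed.

(* A pair of degree 0 in the cleaned graph is low or contains a heavy vertex. *)
Lemma cleaned_zero_pairs :
  (#|[set S : {set 'I_n} | (#|S| == 2) && (deg cleaned S == 0)]|
     <= #|low_ord| + #|heavy| * n)%N.
Proof.
have cover : [set S : {set 'I_n} | (#|S| == 2) && (deg cleaned S == 0)] \subset
    (fun p => [set p.1; p.2]) @: (low_ord :|: setX heavy [set: 'I_n]).
  apply/subsetP => S; rewrite inE => /andP [/cards2P [x [y [nxy ->]]] /eqP deg0].
  apply/imsetP.
  have [xy_low|xy_ok] := boolP ([set x; y] \in low_pairs).
    by exists (x, y); rewrite // in_setU ordered_pairsE xy_low.
  have [x_heavy|x_ok] := boolP (x \in heavy).
    by exists (x, y); rewrite // in_setU in_setX in_setT x_heavy orbT.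
  have [y_heavy|y_ok] := boolP (y \in heavy).
    by exists (y, x); [rewrite in_setU in_setX in_setT y_heavy orbT | exact: setUC].
  have := cleaned_deg_lb nxy xy_ok x_ok y_ok; rewrite deg0.
  by have := mulr_gt0 d_gt0 m_gt0; lra.
apply: (leq_trans (subset_leq_card cover)); apply: (leq_trans (leq_imset_card _ _)).
by apply: (leq_trans (card_setU_le _ _)); rewrite cardsX cardsT card_ord.
Qed.
End FewHeavy.
End LowDegreePairs.

Lemma fifth_power_small (R : realFieldType) (r d : R) :
  0 <= r -> r * 1000 <= d -> d <= 1 -> r ^+ 5 * (1000 * 1000) <= r * d ^+ 2.
Proof.
move=> r_ge0 r_small d_le1.
have r2_small : r ^+ 2 * (1000 * 1000) <= d ^+ 2.
  by rewrite -[1000 * 1000]/(1000 ^+ 2) -exprMn ler_pXn2r // nnegrE; lra.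
have r4_le_r2 : r ^+ 4 <= r ^+ 2.
  have r2_le1 : r ^+ 2 <= 1 by rewrite exprn_ile1 //; lra.
  by rewrite (exprM r 2 2) -[X in _ <= X]mulr1 expr2 ler_wpM2l // exprn_ge0.
rewrite (exprS r 4); have := exprn_ge0 4 r_ge0; nra.
Qed.

Lemma cleaning_constants (R : realFieldType) (d rho r m N V : R) :
  0 < d -> d <= 1 -> 0 <= r -> r * 1000 <= d -> rho = r ^+ 5 -> 0 < m ->
  N * d * m <= 3 * rho * m ^+ 3 -> V * (d * m / 12) <= N ->
  [/\ V <= d * m / 6, N + V * m <= r * m ^+ 2 / 4
    & rho * m ^+ 3 + 3 * (N * m) + 3 * (V * (m * m)) <= r * m ^+ 3].
Proof.
move=> d_gt0 d_le1 r_ge0 r_small -> m_gt0 N_bound V_bound.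
have m_ge0 := ltW m_gt0.
have rm2_ge0 : 0 <= r * m ^+ 2 by rewrite mulr_ge0 // exprn_ge0.
have N_small : N * (1000 * 1000) <= 3 * r * d * m ^+ 2.
  have : N * d <= 3 * r ^+ 5 * m ^+ 2.
    by rewrite -(ler_pM2r m_gt0); move: N_bound; rewrite !exprS expr0; lra.
  have := fifth_power_small r_ge0 r_small d_le1.
  have := exprn_ge0 2 m_ge0; rewrite -(ler_pM2r d_gt0) expr2; nra.
have N_small' : N * (1000 * 1000) <= 3 * r * m ^+ 2 by nra.
have V_small : V * (1000 * 1000) <= 36 * r * m.
  rewrite -(ler_pM2r (mulr_gt0 d_gt0 m_gt0)); move: N_small; rewrite expr2; nra.
have Vm_small : V * m * (1000 * 1000) <= 36 * r * m ^+ 2.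
  by have := ler_wpM2r m_ge0 V_small; rewrite expr2; lra.
split; [nra | lra |].
have m3_ge0 := exprn_ge0 3 m_ge0.
have rho_small : r ^+ 5 * m ^+ 3 * (1000 * 1000) <= r * m ^+ 3.
  have := ler_wpM2r m3_ge0 (fifth_power_small r_ge0 r_small d_le1).
  have : r * d ^+ 2 * m ^+ 3 <= r * m ^+ 3.
    rewrite -mulrA ler_wpM2l // -[X in _ <= X]mul1r ler_wpM2r //.
    by rewrite exprn_ile1 // ltW.
  lra.
have := ler_wpM2r m_ge0 N_small'; have := ler_wpM2r m_ge0 Vm_small.
have := mulr_ge0 r_ge0 m3_ge0.
rewrite !exprS expr0 in rho_small *; lra.
Qed.

(* The cleaning lemma over any real field, under the condition 1000 r <= d
   (which the hypothesis rho <= d^5 / (3^40 2^5) of the theorem implies). *)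
Lemma cleaning_lemma (R : realFieldType) (d rho r : R) (n : nat)
    (E : {set {set 'I_n}}) :
  0 < d -> d <= 1 -> 0 <= r -> r * 1000 <= d -> rho = r ^+ 5 -> (2 <= n)%N ->
  is_3graph E -> cherry_dense E rho d ->
  exists E' : {set {set 'I_n}},
    E' \subset E /\
    (forall S : {set 'I_n}, #|S| = 2%N ->
       d * n%:R / 3 <= (deg E' S)%:R \/ deg E' S = 0%N) /\
    (#|[set S : {set 'I_n} | (#|S| == 2%N) && (deg E' S == 0%N)]|%:R
       <= r * ('C(n, 2))%:R) /\
    cherry_dense E' r d.
Proof.
move=> d_gt0 d_le1 r_ge0 r_small rho_r n_ge2 E3 E_dense.
have [few_heavy zeros_small loss_small] :=
  cleaning_constants d_gt0 d_le1 r_ge0 r_small rho_r (m_gt0 R n_ge2)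
    (card_low_pairs E3 E_dense) (card_heavy E d).
exists (cleaned E d); split; first exact: clean_sub.
split; first exact: cleaned_deg_dichotomy E3 few_heavy.
split.
  have m2_small : (n%:R : R) ^+ 2 <= 4 * ('C(n, 2))%:R.
    by rewrite -natrX -[4]/(4%:R) -natrM ler_nat expnS expn1 sqr_le_4bin2.
  have := cleaned_zero_pairs E3 d_gt0 n_ge2 few_heavy.
  rewrite -(ler_nat R) natrD natrM; nra.
move=> G1 G2; have := E_dense G1 G2.
have := eH_clean_loss E (heavy E d) (@low_pairs_card2 _ _ E d) G1 G2.
by rewrite -(ler_nat R) !natrD !natrM; lra.
Qed.

Theorem lemma2p2 :
  exists n0 : nat,
  forall (R : rcfType) (d rho r : R) (n : nat) (E : {set {set 'I_n}}),
    0 < d -> d <= 1 ->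
    0 < rho -> rho <= d ^+ 5 / (3 ^+ 40 * 2 ^+ 5) ->
    0 <= r -> r ^+ 5 = rho ->        (* r = rho^(1/5) *)
    (n0 <= n)%N ->
    is_3graph E ->
    cherry_dense E rho d ->
    exists E' : {set {set 'I_n}},
      E' \subset E /\
      (forall S : {set 'I_n}, #|S| = 2%N ->
         d * n%:R / 3 <= (deg E' S)%:R \/ deg E' S = 0%N) /\
      (#|[set S : {set 'I_n} | (#|S| == 2%N) && (deg E' S == 0%N)]|%:R
         <= r * ('C(n, 2))%:R) /\
      cherry_dense E' r d.
Proof.
exists 2%N => R d rho r n E d_gt0 d_le1 _ rho_le r_ge0 r5 n_ge2 E3 E_dense.
have rho_const : rho * (3 ^+ 40 * 2 ^+ 5) <= d ^+ 5.
  by rewrite -ler_pdivlMr // mulr_gt0 // exprn_gt0.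
(* Taking fifth roots in rho (3^8 * 2)^5 <= d^5 gives 13122 r <= d. *)
have r_small : r * (3 ^+ 8 * 2) <= d.
  rewrite -(@ler_pXn2r _ 5) ?nnegrE ?(ltW d_gt0) ?mulr_ge0 ?exprn_ge0 //.
  by rewrite exprMn r5 exprMn -exprM.
have pow38 : (3 : R) ^+ 8 = 6561 by rewrite -natrX.
apply: (cleaning_lemma d_gt0 d_le1 r_ge0 _ (esym r5) n_ge2 E3 E_dense).
by rewrite pow38 in r_small; lra.
Qed.
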